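(* Suppose $(\varepsilon,\beta,\gamma;(12))\in\mathrm{Par}(n)$. Fix a positive integer $d$, and let $r$ be the number of cycles of $\beta$ of length $d$. Let $f$ be the number of fixed points of $\gamma$. If $r>0$, then: <ul> <li>(i) $f\le (r-1)d$ if $d$ is even;</li> <li>(ii) $f\le (r-1)d+1$ if $d$ is odd.</li> </ul>
   Context: A Latin square of order $n$ is an $n\times n$ array with rows, columns and symbols indexed by $[n]$, each symbol occurring once in each row and each column, with triple set $O(L)$. Permutations act on the right; $\varepsilon$ is the identity; fixed points count as cycles of length $1$. A paratopism $(\alpha,\beta,\gamma;(12))$ maps $L$ to $L^\sigma$ with triple set $\{(y\beta,x\alpha,z\gamma):(x,y,z)\in O(L)\}$; it is an autoparatopism of $L$ if $L^\sigma=L$. $\mathrm{Par}(n)$ is the set of paratopisms that are autoparatopisms of at least one Latin square of order $n$. *)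

From mathcomp Require Import all_boot all_fingroup.
Set Implicit Arguments. Unset Strict Implicit. Unset Printing Implicit Defensive.

(* A Latin square of order n: rows, columns, symbols indexed by 'I_n;
   L x y is the symbol in row x, column y. *)
Definition latin_square (n : nat) (L : 'I_n -> 'I_n -> 'I_n) : Prop :=
  (forall x : 'I_n, injective (fun y => L x y)) /\
  (forall y : 'I_n, injective (fun x => L x y)).

(* Triple set O(L), a triple (x,y,z) encoded as ((x,y),z). *)
Definition triples (n : nat) (L : 'I_n -> 'I_n -> 'I_n)
  : {set 'I_n * 'I_n * 'I_n} :=
  [set t | t.2 == L t.1.1 t.1.2].

(* Triple set of L^sigma for sigma = (alpha, beta, gamma; (12)):
   { (y beta, x alpha, z gamma) : (x,y,z) in O(L) }  (right action = application). *)
Definition para12_image (n : nat) (a b c : {perm 'I_n}) (L : 'I_n -> 'I_n -> 'I_n)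
  : {set 'I_n * 'I_n * 'I_n} :=
  [set ((b t.1.2, a t.1.1), c t.2) | t in triples L].

Definition autoparatopism12 (n : nat) (a b c : {perm 'I_n}) (L : 'I_n -> 'I_n -> 'I_n) : Prop :=
  para12_image a b c L = triples L.

Definition in_Par12 (n : nat) (a b c : {perm 'I_n}) : Prop :=
  exists L : 'I_n -> 'I_n -> 'I_n, latin_square L /\ autoparatopism12 a b c L.

(* number of cycles (fixed points included) of s of length d *)
Definition num_cycles_len (n : nat) (s : {perm 'I_n}) (d : nat) : nat :=
  #|[set C in porbits s | #|C| == d]|.

Definition num_fixed (n : nat) (s : {perm 'I_n}) : nat :=
  #|[set x : 'I_n | s x == x]|.

(* If sigma = (1, b, c; (12)) is an autoparatopism of L, then L (b y) x = c (L x y).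
   For a symbol z fixed by c, let t_z send a column u to the row in which z
   occurs in column u; the identity gives t_z (t_z u) = b u, so t_z is a square
   root of b. Square roots of b commute with b and preserve the lengths of its
   cycles, and a square root maps a point of a b-cycle of length d into the same
   cycle only if d is odd, and then onto a uniquely determined point. Fix a
   column y in a d-cycle of b: the map z |-> t_z y is injective on the fixed
   symbols of c, and sends them into the (r - 1) d points of the other d-cycles
   of b, or (only for odd d) to that one point of the cycle of y. *)

From mathcomp Require Import all_boot all_fingroup.
From mathcomp Require Import zify.
Set Implicit Arguments. Unset Strict Implicit. Unset Printing Implicit Defensive.

Section PermOrbits.

Variable T : finType.
Implicit Types (s : {perm T}) (x : T).

Lemma permX_modn s x k : (s ^+ k)%g x = (s ^+ (k %% #|porbit s x|))%g x.
Proof.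
have s_p : (s ^+ #|porbit s x|)%g x = x by rewrite permX iter_porbit.
have s_qp q : (s ^+ (q * #|porbit s x|))%g x = x.
  by elim: q => [|q IHq]; rewrite ?perm1 // mulSn expgD permM s_p.
by rewrite {1}(divn_eq k #|porbit s x|) expgD permM s_qp.
Qed.

Lemma eq_permX_mod s x k l :
  ((s ^+ k)%g x == (s ^+ l)%g x) = (k == l %[mod #|porbit s x|]).
Proof.
have p_gt0 : 0 < #|porbit s x| by rewrite lt0n card_porbit_neq0.
rewrite [X in X == _]permX_modn [X in _ == X]permX_modn !permX.
rewrite -(nth_traject _ (ltn_pmod k p_gt0)) -(nth_traject _ (ltn_pmod l p_gt0)).
by rewrite nth_uniq ?size_traject ?ltn_mod ?uniq_traject_porbit.
Qed.

Lemma porbits_card_partition s d :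
  partition [set C in porbits s | #|C| == d] [set x | #|porbit s x| == d].
Proof.
apply/and3P; split.
- apply/eqP/setP => x; rewrite inE; apply/bigcupP/idP.
    move=> [_ /setIdP[/imsetP[u _ ->] /eqP <-] xu].
    by have /eqP -> : porbit s x == porbit s u by rewrite eq_porbit_mem.
  by move=> px; exists (porbit s x); rewrite ?porbit_id // inE px imset_f.
- apply/trivIsetP => _ _ /setIdP[/imsetP[u _ ->] _] /setIdP[/imsetP[v _ ->] _].
  apply: contraR => /pred0Pn[w /andP[/= wu wv]].
  by rewrite -!eq_porbit_mem in wu wv; rewrite -(eqP wu) -(eqP wv).
- by apply/setIdP => -[/imsetP[u _ e] _]; have := porbit_id s u; rewrite -e inE.
Qed.

End PermOrbits.

Lemma card_porbit_size n (s : {perm 'I_n}) d :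
  #|[set x | #|porbit s x| == d]| = num_cycles_len s d * d.
Proof.
apply: card_uniform_partition (porbits_card_partition s d).
by move=> C /setIdP[_ /eqP].
Qed.

Section PermSquareRoot.

Variables (T : finType) (s : {perm T}) (t : T -> T).
Hypothesis tK : forall u, t (t u) = s u.

Lemma sqrt_perm_commute u : t (s u) = s (t u).
Proof. by rewrite -tK. Qed.

Lemma sqrt_perm_commuteX i u : t ((s ^+ i)%g u) = (s ^+ i)%g (t u).
Proof.
by elim: i => [|i IHi]; rewrite ?perm1 // expgSr !permM sqrt_perm_commute IHi.
Qed.

Lemma sqrt_perm_inj : injective t.
Proof. by move=> u v tuv; apply: (@perm_inj _ s); rewrite -!tK tuv. Qed.

Lemma porbit_sqrt_perm u : porbit s (t u) = t @: porbit s u.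
Proof.
apply/setP => v; apply/porbitP/imsetP => [[i ->] | [_ /porbitP[i ->] ->]].
  by exists ((s ^+ i)%g u); rewrite ?mem_porbit ?sqrt_perm_commuteX.
by exists i; rewrite sqrt_perm_commuteX.
Qed.

Lemma card_porbit_sqrt_perm u : #|porbit s (t u)| = #|porbit s u|.
Proof. by rewrite porbit_sqrt_perm card_imset //; apply: sqrt_perm_inj. Qed.

(* Writing t y = s^j y, we get s y = t (t y) = s^(2j) y, i.e. 2j = 1 modulo the
   cycle length d, which forces d odd and j = (d+1)/2 modulo d. *)
Lemma sqrt_perm_in_porbit y : t y \in porbit s y ->
  odd #|porbit s y| /\ t y = (s ^+ (#|porbit s y|./2).+1)%g y.
Proof.
set d := #|porbit s y|; case/porbitP => j tyE.
have two_j : j + j = 1 %[mod d].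
  apply/eqP; rewrite -eq_permX_mod expgD permM expg1 -tyE -sqrt_perm_commuteX.
  by rewrite -tyE tK.
have d_odd : odd d.
  apply: contraT => /negbTE d_even.
  by have := odd_mod (j + j) d_even; rewrite two_j odd_mod // addnn odd_double.
split=> //; rewrite tyE; apply/eqP; rewrite eq_permX_mod.
have d_half : d = (d./2).*2.+1 by rewrite -[LHS]odd_double_half d_odd.
have -> : j = (j + j) * (d./2).+1 %[mod d].
  have -> : (j + j) * (d./2).+1 = j * d + j by rewrite {2}d_half; lia.
  by rewrite modnMDl.
by rewrite -modnMml two_j modnMml mul1n.
Qed.

End PermSquareRoot.

Lemma card_sqrt_perm_family (Z T : finType) (s : {perm T}) (F : {set Z})
    (t : Z -> T -> T) (y : T) :
  (forall z, z \in F -> forall u, t z (t z u) = s u) ->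
  {in F &, injective (fun z => t z y)} ->
  #|F| <= #|[set x | #|porbit s x| == #|porbit s y|]| - #|porbit s y|
          + odd #|porbit s y|.
Proof.
move=> tK t_inj; set d := #|porbit s y|; set X := [set x | _ == d].
pose B := [set z | t z y \in porbit s y].
have YX : porbit s y \subset X.
  by apply/subsetP => x; rewrite -eq_porbit_mem inE => /eqP ->.
rewrite -(cardsID B F) addnC leq_add //.
  have t_injD : {in F :\: B &, injective (fun z => t z y)}.
    by move=> z1 z2 /setDP[z1F _] /setDP[z2F _]; apply: t_inj.
  rewrite -(card_in_imset t_injD) /d -(setIidPr YX) -cardsD subset_leq_card //.
  apply/subsetP => _ /imsetP[z /setDP[zF zB] ->].
  by move: zB; rewrite !inE (card_porbit_sqrt_perm (tK z zF)) eqxx andbT.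
have sqrtE z : z \in F :&: B -> odd d /\ t z y = (s ^+ d./2.+1)%g y.
  by case/setIP=> zF; rewrite inE; apply: (sqrt_perm_in_porbit (tK z zF)).
have [-> | [z /sqrtE[-> _]]] := set_0Vmem (F :&: B); first by rewrite cards0.
apply/card_le1_eqP => z1 z2 z1FB z2FB.
move: (z1FB) (z2FB) => /setIP[z1F _] /setIP[z2F _].
by apply: t_inj; rewrite // (sqrtE _ z1FB).2 (sqrtE _ z2FB).2.
Qed.

Lemma autoparatopism12E n (a b c : {perm 'I_n}) L :
  autoparatopism12 a b c L -> forall x y, L (b y) (a x) = c (L x y).
Proof.
move=> aL x y; apply/eqP.
have : ((b y, a x), c (L x y)) \in para12_image a b c L.
  by apply/imsetP; exists ((x, y), L x y); rewrite // inE.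
by rewrite aL inE eq_sym.
Qed.

Section LatinAutoparatopism.

Variables (n : nat) (L : 'I_n -> 'I_n -> 'I_n) (b c : {perm 'I_n}).
Hypothesis L_col_inj : forall y, injective (fun x => L x y).
Hypothesis bcL : autoparatopism12 1 b c L.

Definition row_of (z y : 'I_n) : 'I_n := invF (@L_col_inj y) z.

Lemma row_ofK z y : L (row_of z y) y = z.
Proof. exact: (f_invF (@L_col_inj y)). Qed.

Lemma row_of_inj y : injective (row_of ^~ y).
Proof. by move=> z w e; rewrite -(row_ofK z y) -(row_ofK w y) e. Qed.

Lemma row_of_sqrt z : c z = z -> forall u, row_of z (row_of z u) = b u.
Proof.
move=> cz u; have := autoparatopism12E bcL (row_of z u) u.
by rewrite perm1 row_ofK cz => Lbu; rewrite /row_of -[X in invF _ X]Lbu invF_f.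
Qed.

Lemma num_fixed_autoparatopism12 y :
  num_fixed c <= #|[set x | #|porbit b x| == #|porbit b y|]| - #|porbit b y|
                 + odd #|porbit b y|.
Proof.
apply: card_sqrt_perm_family => [z | z w _ _]; last exact: row_of_inj.
by rewrite inE => /eqP; apply: row_of_sqrt.
Qed.

End LatinAutoparatopism.

Theorem theorem4p4 (n : nat) (b c : {perm 'I_n}) (d : nat) :
  0 < d ->
  in_Par12 1%g b c ->
  0 < num_cycles_len b d ->
  (~~ odd d -> num_fixed c <= (num_cycles_len b d - 1) * d) /\
  (odd d -> num_fixed c <= (num_cycles_len b d - 1) * d + 1).
Proof.
(* The hypothesis [0 < d] is implied by the existence of a cycle of length d. *)
move=> _ [L [[_ L_col_inj] bcL]].
rewrite card_gt0 => /set0Pn[_ /setIdP[/imsetP[y _ ->] /eqP yd]].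
have := num_fixed_autoparatopism12 L_col_inj bcL y.
rewrite yd card_porbit_size mulnBl mul1n.
by case: (odd d) => /=; rewrite ?addn0 => fix_le; split.
Qed.
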